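(* Assume $n=\sum_l c_l$, let $\pi'$ maximize $\sum_i g_{\pi_i}(x_i)$ over $\Pi_{\mathbf x,\mathbf y,\mathbf l}$, and let $\mathbf g'$ be as defined from an optimal dual solution $(\hat{\mathbf u},\hat{\mathbf v})$ ($g'_l(x_i)=\hat u_i+\hat v_l$ if $\pi'_i=l$, else $g_l(x_i)$). Then $\|\mathbf g'-\mathbf g\|_1\le\|\mathbf g''-\mathbf g\|_1$ for every $\pi''\in\Pi_{\mathbf x,\mathbf y,\mathbf l}$ and every $\mathbf g''$ with $\pi''\in\hat\Pi(\mathbf g'')$; that is, $\mathbf g'$ is a minimal modification of $\mathbf g$ under which some counterfactually harmless assignment maximizes predicted utility.
   Context: Setup: a pool $\mathcal I$ of $n$ refugees with features $\mathbf x=(x_i)$, realized placements $\mathbf l=(l_i)\in\mathcal L^n$ and outcomes $\mathbf y\in\{0,1\}^n$; finite location set $\mathcal L$ with capacities $c_l$; predicted probabilities $\mathbf g=(g_l(x_i))\in[0,1]^{\mathcal I\times\mathcal L}$. An assignment is a map $\pi:\mathcal I\to\mathcal L$ with $|\{i:\pi_i=l\}|\le c_l$. For a weight matrix $\mathbf h$, $\hat\Pi(\mathbf h)$ is the set of assignments maximizing $\sum_i h_{\pi_i}(x_i)$. $\Pi_{\mathbf x,\mathbf y,\mathbf l}$ is the set of assignments with $\pi_i=l_i$ whenever $y_i=1$. The dual linear program is $\min \sum_i u_i+\sum_l c_lv_l$ s.t. $u_i+v_l\ge g_l(x_i)$ for all $i,l$, $u_i,v_l\ge0$. $\|\cdot\|_1$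 is the entrywise $\ell_1$ norm. *)

From mathcomp Require Import all_boot all_order all_algebra.
Set Implicit Arguments. Unset Strict Implicit. Unset Printing Implicit Defensive.
Import Order.TTheory GRing.Theory Num.Theory.
Local Open Scope ring_scope.

Section Defs.
Variables (R : realFieldType) (I L : finType).

Definition is_assignment (c : L -> nat) (pi : I -> L) : Prop :=
  forall l : L, (#|[pred i | pi i == l]| <= c l)%N.

(* Total (predicted) utility of pi under weight matrix h (h i l = h_l(x_i)). *)
Definition utility (h : I -> L -> R) (pi : I -> L) : R :=
  \sum_(i : I) h i (pi i).

Definition opt_assignment (c : L -> nat) (h : I -> L -> R) (pi : I -> L) : Prop :=
  is_assignment c pi /\
  forall sigma : I -> L, is_assignment c sigma -> utility h sigma <= utility h pi.

Definition harmless (c : L -> nat) (y : I -> bool) (lr : I -> L) (pi : I -> L) : Prop :=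
  is_assignment c pi /\ forall i : I, y i -> pi i = lr i.

Definition dual_feasible (h : I -> L -> R) (u : I -> R) (v : L -> R) : Prop :=
  (forall i l, h i l <= u i + v l) /\ (forall i, 0 <= u i) /\ (forall l, 0 <= v l).

Definition dual_obj (c : L -> nat) (u : I -> R) (v : L -> R) : R :=
  \sum_(i : I) u i + \sum_(l : L) (c l)%:R * v l.

Definition dual_optimal (c : L -> nat) (h : I -> L -> R) (u : I -> R) (v : L -> R) : Prop :=
  dual_feasible h u v /\
  forall u2 v2, dual_feasible h u2 v2 -> dual_obj c u v <= dual_obj c u2 v2.

Definition l1dist (h k : I -> L -> R) : R :=
  \sum_(i : I) \sum_(l : L) `|h i l - k i l|.

Definition modified (h : I -> L -> R) (pi : I -> L) (u : I -> R) (v : L -> R)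
  : I -> L -> R :=
  fun i l => if pi i == l then u i + v l else h i l.

End Defs.

(* Everything reduces to strong duality for the capacitated assignment LP: if
   #|I| = sum_l c_l and g >= 0, an optimal dual (u, v) has the value of some
   assignment pi.  Otherwise Hall's condition fails in the bipartite graph of tight
   pairs (u_i + v_l = g_il): some S has sum_{l in N(S)} c_l < #|S|, and lowering u
   on S while raising v on N(S) (corrected by a constant shift that keeps u, v >= 0
   and, as #|I| = sum_l c_l, does not change the objective) decreases the dual
   objective.  Hall's theorem comes from a maximum matching: the vertices reachable
   from an unmatched one by alternating paths form a deficient set.

   With pi at hand, |g' - g|_1 = sum_i (u_i + v_(pi'_i) - g_(i pi'_i))
   <= obj(u, v) - U_g(pi') = U_g(pi) - U_g(pi'), whereas any g'' maximised by a
   harmless pi'' satisfies |g'' - g|_1 >= U_g(pi) - U_g''(pi) + U_g''(pi'') - U_g(pi'')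
   >= U_g(pi) - U_g(pi'') >= U_g(pi) - U_g(pi'). *)

From mathcomp Require Import all_boot all_order all_algebra perm.
From mathcomp Require Import zify lra.
Set Implicit Arguments. Unset Strict Implicit. Unset Printing Implicit Defensive.
Import Order.TTheory GRing.Theory Num.Theory.

Section CapacitatedHall.
Variables (I L : finType) (t : I -> L -> bool) (c : L -> nat).

Definition neighbours (S : {set I}) : {set L} := [set l | [exists i in S, t i l]].

Definition load (p : I -> option L) (l : L) : nat := #|[set j | p j == Some l]|.

Definition uses_edges (p : I -> option L) : bool :=
  [forall j, if p j is Some l then t j l else true].

Definition matching (p : I -> option L) : bool :=
  uses_edges p && [forall l, load p l <= c l].

Definition matching_size (p : I -> option L) : nat := \sum_l load p l.

Lemma load_perm (p : I -> option L) (s : {perm I}) : load (p \o s) =1 load p.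
Proof.
move=> l; rewrite /load -[RHS](card_preimset _ (@perm_inj _ s)).
by apply: eq_card => j; rewrite !inE.
Qed.

Lemma load_update (p : I -> option L) i l l' : p i = None ->
  load (fun j => if j == i then Some l else p j) l' = (load p l' + (l == l'))%N.
Proof.
move=> p_i; rewrite /load; case: eqVneq => [<-|nll'].
  have -> : [set j | (if j == i then Some l else p j) == Some l]
            = i |: [set j | p j == Some l].
    by apply/setP => j; rewrite !inE; case: (eqVneq j i) => [->|]; rewrite ?eqxx.
  by rewrite cardsU1 inE p_i addnC.
rewrite addn0; apply: eq_card => j; rewrite !inE.
by case: (eqVneq j i) => [->|//]; rewrite p_i; apply: negbTE.
Qed.

(* [alt_reach p k]: the vertices reachable from an unmatched one by an alternating
   path of length at most [2 k]. *)
Fixpoint alt_reach (p : I -> option L) (k : nat) : {set I} :=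
  if k is k'.+1 then
    alt_reach p k' :|:
      [set j | if p j is Some l then l \in neighbours (alt_reach p k') else false]
  else [set j | p j == None].

Lemma alt_reach_subS p k : alt_reach p k \subset alt_reach p k.+1.
Proof. exact: subsetUl. Qed.

Lemma unmatched_alt_reach p k j : p j = None -> j \in alt_reach p k.
Proof.
move=> pj; elim: k => [|k IH]; first by rewrite inE pj.
exact: subsetP (alt_reach_subS p k) _ IH.
Qed.

Lemma alt_reach_stable p : exists k, alt_reach p k.+1 = alt_reach p k.
Proof.
suff grow k : (exists k, alt_reach p k.+1 = alt_reach p k) \/ (k <= #|alt_reach p k|)%N.
  by case: (grow #|I|.+1) => // /leq_trans /(_ (max_card _)); rewrite ltnn.
elim: k => [|k [//|IH]]; [by right | by left |].
have [eqk|neqk] := eqVneq (alt_reach p k.+1) (alt_reach p k); first by left; exists k.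
right; apply: leq_ltn_trans IH (proper_card _).
by rewrite properEneq eq_sym neqk alt_reach_subS.
Qed.

(* Shift the matching along an alternating path ending at [i]. *)
Lemma alt_reach_free p k i : uses_edges p -> i \in alt_reach p k ->
  exists q : I -> option L, [/\ uses_edges q, load q =1 load p, q i = None
                              & {in ~: alt_reach p k, q =1 p}].
Proof.
move=> p_edges; elim: k i => [|k IH] i /=.
  by rewrite inE => /eqP p_i; exists p.
have outS j : j \in ~: alt_reach p k.+1 -> j \in ~: alt_reach p k.
  by apply/subsetP; rewrite setCS alt_reach_subS.
have [ik _|nik] := boolP (i \in alt_reach p k).
  have [q [q_edges lq qi qp]] := IH i ik.
  by exists q; split=> // j /outS; apply: qp.
rewrite in_setU (negbTE nik) inE; case p_i: (p i) => [l|//].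
rewrite inE => /exists_inP[j' j'k tj'l].
have [q [/forallP q_edges lq qj' qp]] := IH j' j'k.
have qi : q i = Some l by rewrite qp ?inE // -p_i.
have nij' : i != j' by apply: contraNneq nik => ->.
exists (q \o tperm i j'); split=> [|l'|/=|j].
- apply/forallP => j /=.
  by case: tpermP => [->|->|_ _]; [rewrite qj' | rewrite qi | apply: q_edges].
- by rewrite load_perm lq.
- by rewrite tpermL.
- rewrite inE in_setU inE negb_or => /andP[jk jnew] /=.
  rewrite tpermD ?qp ?inE //; last by apply: contraNneq jk => <-.
  apply: contraNneq jnew => <-; by rewrite p_i inE; apply/exists_inP; exists j'.
Qed.

Lemma load_finfun (f : I -> option L) : load (finfun f) =1 load f.
Proof. by move=> l; apply: eq_card => j; rewrite !inE ffunE. Qed.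

Lemma max_matching_saturated (p : {ffun I -> option L}) k i l :
    matching p ->
    (forall q : {ffun I -> option L}, matching q ->
       matching_size q <= matching_size p)%N ->
    i \in alt_reach p k -> t i l -> load p l = c l.
Proof.
move=> /andP[p_edges /forallP p_cap] p_max ik til.
apply/eqP; rewrite eqn_leq p_cap leqNgt; apply/negP => l_free.
have [q [/forallP q_edges lq qi _]] := alt_reach_free p_edges ik.
pose q' := finfun (fun j => if j == i then Some l else q j).
have lq' l' : load q' l' = (load p l' + (l == l'))%N.
  by rewrite load_finfun load_update // lq.
have : (matching_size q' <= matching_size p)%N.
  apply: p_max; apply/andP; split.
    apply/forallP => j; rewrite ffunE.
    by case: eqVneq => [->|_]; [exact: til | apply: q_edges].
  apply/forallP => l'; rewrite lq'; case: eqVneq => [<-|_]; last by rewrite addn0.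
  by rewrite addn1.
rewrite /matching_size (eq_bigr _ (fun l' _ => lq' l')) big_split /=.
have -> : (\sum_l' (l == l') = 1)%N.
  by rewrite (bigD1 l) //= eqxx big1 // => l'; rewrite eq_sym => /negbTE ->.
by rewrite addn1 ltnn.
Qed.

Lemma sum_load (p : I -> option L) (A : {set L}) :
  (\sum_(l in A) load p l =
   #|[set j | if p j is Some l then l \in A else false]|)%N.
Proof.
have card_ind (B : {set I}) : #|B| = (\sum_j (j \in B))%N.
  by rewrite -sum1_card big_mkcond; apply: eq_bigr => j _; case: (j \in B).
rewrite card_ind /load; under eq_bigr do rewrite card_ind.
rewrite exchange_big.
apply: eq_bigr => j _; rewrite inE; under eq_bigr do rewrite inE.
case: (p j) => [l0|]; last by rewrite big1.
have [l0A|l0A] := boolP (l0 \in A).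
  rewrite (bigD1 l0) //= eqxx big1 // => l /andP[_ nl].
  by case: eqP => // -[l0l]; rewrite l0l eqxx in nl.
by rewrite big1 // => l lA; case: eqP => // -[l0l]; rewrite l0l lA in l0A.
Qed.

Theorem capacitated_hall :
    (forall S : {set I}, #|S| <= \sum_(l in neighbours S) c l)%N ->
  exists pi : I -> L, (forall i, t i (pi i)) /\ is_assignment c pi.
Proof.
move=> hall.
have empty_matching : matching [ffun=> None].
  apply/andP; split; first by apply/forallP => j; rewrite ffunE.
  apply/forallP => l; rewrite /load (eq_card (B := set0)) ?cards0 //.
  by move=> j; rewrite !inE ffunE.
have [p p_match p_max] := @arg_maxnP _ _ (fun q : {ffun I -> option L} => matching q)
  (fun q => matching_size q) empty_matching.
have [/forallP p_edges /forallP p_cap] := andP p_match.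
have [/existsP[j0 /eqP pj0] | /existsPn all_matched] := boolP [exists j, p j == None].
  have [k stable] := alt_reach_stable p; set S := alt_reach p k.
  have matched_in_S :
      [set j | if p j is Some l then l \in neighbours S else false] \proper S.
    apply/properP; split; last by exists j0; rewrite ?inE ?pj0 ?unmatched_alt_reach.
    by apply/subsetP => j jN; rewrite /S -stable in_setU jN orbT.
  have saturated l : l \in neighbours S -> c l = load p l.
    rewrite inE => /exists_inP[i iS til].
    by rewrite (max_matching_saturated p_match p_max iS til).
  by have := hall S; rewrite (eq_bigr _ saturated) sum_load leqNgt proper_card.
have [pi ppi] : exists pi : I -> L, forall j, p j = Some (pi j).
  apply: (@fin_all_exists _ (fun=> L) (fun j l => p j = Some l)) => j.
  by move: (all_matched j); case: (p j) => [l _|//]; exists l.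
exists pi; split=> [i | l]; first by move: (p_edges i); rewrite ppi.
apply: leq_trans (p_cap l); apply: eq_leq; apply: eq_card => j.
by rewrite !inE ppi.
Qed.

End CapacitatedHall.

Local Open Scope ring_scope.

Lemma exists_pos_lower_bound (R : realDomainType) (T : finType) (P : pred T)
    (F : T -> R) :
  (forall x, P x -> 0 < F x) -> exists2 e, 0 < e & forall x, P x -> e <= F x.
Proof.
move=> F_gt0; exists (\big[Num.min/1]_(x | P x) F x).
  by elim/big_rec: _ => // x m Px m_gt0; rewrite lt_min F_gt0.
by move=> x Px; apply: bigmin_le_cond.
Qed.

Lemma sum_card_fibres (I L : finType) (pi : I -> L) :
  (\sum_l #|[pred i | pi i == l]|)%N = #|I|.
Proof.
rewrite -sum1_card (partition_big pi xpredT) //=.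
by apply: eq_bigr => l _; rewrite sum1_card.
Qed.

Lemma sum_over_fibres (R : nmodType) (I L : finType) (pi : I -> L) (f : L -> R) :
  \sum_i f (pi i) = \sum_l f l *+ #|[pred i | pi i == l]|.
Proof.
rewrite (partition_big pi xpredT) //=; apply: eq_bigr => l _.
by rewrite (eq_bigr (fun=> f l)) => [|i /eqP ->]; rewrite ?sumr_const.
Qed.

Lemma card_fibres_full (I L : finType) (c : L -> nat) (pi : I -> L) :
  is_assignment c pi -> #|I| = (\sum_l c l)%N ->
  forall l, #|[pred i | pi i == l]| = c l.
Proof.
move=> pi_cap card_I l; apply/eqP; rewrite eqn_leq pi_cap /=.
have := sum_card_fibres pi; rewrite card_I (bigD1 l) //= [in RHS](bigD1 l) //=.
have := @leq_sum _ (index_enum L) (fun l' => l' != l) _ _ (fun l' _ => pi_cap l').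
lia.
Qed.

Section Duality.
Variables (R : realFieldType) (I L : finType) (g : I -> L -> R) (c : L -> nat).
Hypothesis g_ge0 : forall i l, 0 <= g i l.
Hypothesis card_I : #|I| = (\sum_l c l)%N.

Definition tight (u : I -> R) (v : L -> R) i l : bool := u i + v l == g i l.

Lemma dual_obj_shift (u : I -> R) (v : L -> R) (S : {set I}) (N : {set L}) e s :
  dual_obj c (fun i => u i + s - (if i \in S then e else 0))
             (fun l => v l - s + (if l \in N then e else 0))
  = dual_obj c u v - (#|S|%:R - (\sum_(l in N) c l)%:R) * e.
Proof.
rewrite /dual_obj sumrB big_split sumr_const -big_mkcond sumr_const /=.
rewrite (eq_bigr (fun l => (c l)%:R * v l - (c l)%:R * s
                           + (if l \in N then (c l)%:R * e else 0))); last first.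
  by move=> l _; rewrite mulrDr mulrBr; case: (l \in N); rewrite ?mulr0.
rewrite big_split sumrB /= -big_mkcond -!mulr_suml -!natr_sum -card_I cardT.
by rewrite -[s *+ _]mulr_natl -[e *+ _]mulr_natl; lra.
Qed.

Lemma dual_descent (u : I -> R) (v : L -> R) (S : {set I}) :
    dual_feasible g u v -> (\sum_(l in neighbours (tight u v) S) c l < #|S|)%N ->
  exists u' v', dual_feasible g u' v' /\ dual_obj c u' v' < dual_obj c u v.
Proof.
move=> [feas [u_ge0 v_ge0]] deficient; set N := neighbours _ S in deficient.
have slack_gt0 i l : i \in S -> l \notin N -> 0 < u i + v l - g i l.
  move=> iS lN; rewrite subr_gt0 lt_def feas andbT.
  apply: contraNneq lN => tight_il; rewrite inE; apply/exists_inP; exists i => //.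
  exact/eqP.
have [e e_gt0 e_le] : exists2 e, 0 < e &
    forall i l, i \in S -> l \notin N -> e <= u i + v l - g i l.
  have [|e e_gt0 e_le] := @exists_pos_lower_bound R (I * L)%type
    [pred p | (p.1 \in S) && (p.2 \notin N)] (fun p => u p.1 + v p.2 - g p.1 p.2).
    by case=> i l /andP[]; apply: slack_gt0.
  by exists e => // i l iS lN; apply: (e_le (i, l)); rewrite inE /= iS lN.
(* Decrease u on S and increase v on N by e; the shift s keeps u, v >= 0. *)
pose s := \big[Num.max/0]_(i in S) (e - u i).
have s_ge0 : 0 <= s by apply: bigmax_ge_id.
have s_ge i : i \in S -> e - u i <= s by move=> iS; apply: le_bigmax_cond.
have s_le_e : s <= e.
  by apply: bigmax_le => [|i _]; [exact: ltW | have := u_ge0 i; lra].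
have s_le_v l : l \notin N -> s <= v l.
  move=> lN; apply: bigmax_le => [|i iS]; first exact: v_ge0.
  by have := e_le i l iS lN; have := g_ge0 i l; lra.
exists (fun i => u i + s - (if i \in S then e else 0)).
exists (fun l => v l - s + (if l \in N then e else 0)).
split; last first.
  rewrite dual_obj_shift.
  have : 0 < (#|S|%:R - (\sum_(l in N) c l)%:R) * e.
    by rewrite mulr_gt0 // subr_gt0 ltr_nat.
  lra.
split; [move=> i l | split=> [i | l]].
- have := feas i l; have := e_le i l.
  by case: (i \in S); case: (l \in N) => /=; lra.
- by have := u_ge0 i; have := s_ge i; case: (i \in S); lra.
- by have := v_ge0 l; have := s_le_v l; case: (l \in N); lra.
Qed.

Theorem dual_optimal_attained (u : I -> R) (v : L -> R) :
  dual_optimal c g u v ->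
  exists2 pi, is_assignment c pi & utility g pi = dual_obj c u v.
Proof.
move=> [feas opt].
have [pi [pi_tight pi_cap]] :
    exists pi, (forall i, tight u v i (pi i)) /\ is_assignment c pi.
  apply: capacitated_hall => S; rewrite leqNgt; apply/negP => deficient.
  have [u' [v' [feas' lt_obj]]] := dual_descent feas deficient.
  by have := opt u' v' feas'; rewrite leNgt lt_obj.
exists pi => //; rewrite /utility (eq_bigr _ (fun i _ => esym (eqP (pi_tight i)))).
rewrite big_split /= (sum_over_fibres pi v) /dual_obj; congr (_ + _).
apply: eq_bigr => l _.
by rewrite (card_fibres_full pi_cap card_I) mulr_natl.
Qed.

End Duality.

Lemma sum_dual_le_obj (R : realFieldType) (I L : finType) (g : I -> L -> R)
    (c : L -> nat) (u : I -> R) (v : L -> R) (pi : I -> L) :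
  dual_feasible g u v -> is_assignment c pi ->
  \sum_i (u i + v (pi i)) <= dual_obj c u v.
Proof.
move=> [_ [_ v_ge0]] pi_cap; rewrite big_split lerD2l sum_over_fibres.
by apply: ler_sum => l _; rewrite mulr_natl; apply: ler_wpMn2l.
Qed.

Lemma l1dist_modified (R : realFieldType) (I L : finType) (g : I -> L -> R)
    (u : I -> R) (v : L -> R) (pi : I -> L) :
  dual_feasible g u v ->
  l1dist (modified g pi u v) g = \sum_i (u i + v (pi i)) - utility g pi.
Proof.
move=> [feas _]; rewrite /l1dist /utility -sumrB; apply: eq_bigr => i _.
rewrite /modified (bigD1 (pi i)) //= eqxx big1 => [|l].
  by rewrite addr0 ger0_norm // subr_ge0.
by rewrite eq_sym => /negbTE ->; rewrite subrr normr0.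
Qed.

Lemma sub_le_sum_norm (R : realDomainType) (T : finType) (f : T -> R) (a b : T) :
  f b - f a <= \sum_x `|f x|.
Proof.
have [<-|nab] := eqVneq a b; first by rewrite subrr sumr_ge0.
rewrite (bigD1 a) //= (bigD1 b) 1?eq_sym //=.
have : 0 <= \sum_(x | (x != a) && (x != b)) `|f x| by rewrite sumr_ge0.
have := ler_norm (f b); have := ler_norm (- f a); rewrite normrN; lra.
Qed.

Lemma utility_gap_le_l1dist (R : realFieldType) (I L : finType) (g h : I -> L -> R)
    (p q : I -> L) :
  (utility g p - utility h p) + (utility h q - utility g q) <= l1dist h g.
Proof.
rewrite /utility /l1dist -!sumrB -big_split /=; apply: ler_sum => i _.
by have := sub_le_sum_norm (fun l => h i l - g i l) (p i) (q i); lra.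
Qed.

Theorem mainTheorem7 (R : realFieldType) (I L : finType) (X : Type) (x : I -> X)
  (lr : I -> L) (y : I -> bool) (c : L -> nat) (gf : L -> X -> R)
  (hg01 : forall i l, 0 <= gf l (x i) <= 1)
  (hn : #|I| = (\sum_(l : L) c l)%N)
  (pi' : I -> L)
  (hpi'1 : harmless c y lr pi')
  (hpi'2 : forall sigma, harmless c y lr sigma ->
             utility (fun i l => gf l (x i)) sigma <= utility (fun i l => gf l (x i)) pi')
  (u : I -> R) (v : L -> R)
  (huv : dual_optimal c (fun i l => gf l (x i)) u v) :
  forall (pi'' : I -> L) (g'' : I -> L -> R),
    harmless c y lr pi'' -> opt_assignment c g'' pi'' ->
    l1dist (modified (fun i l => gf l (x i)) pi' u v) (fun i l => gf l (x i))
      <= l1dist g'' (fun i l => gf l (x i)).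
Proof.
move=> pi'' g'' harmless'' [_ g''_opt].
set g := fun i l => gf l (x i) in hpi'2 huv *.
have g_ge0 i l : 0 <= g i l by case/andP: (hg01 i l).
have [pi pi_cap pi_val] := dual_optimal_attained g_ge0 hn huv.
have [feas _] := huv.
rewrite l1dist_modified //.
have := sum_dual_le_obj feas hpi'1.1.
have := @utility_gap_le_l1dist _ _ _ g g'' pi pi''.
have := g''_opt pi pi_cap.
have := hpi'2 pi'' harmless''.
lra.
Qed.
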